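(* Consider {\L}ukasiewicz real-valued logic, in which the disjunction $\lor$ has $f_\lor(a,b)=\min\{1,a+b\}$, and let $A_1,A_2$ be distinct atomic propositions. There is no finite Boolean combination (built with classical $\land,\lor,\neg$ over sentences) of sentences of the form $(A_1,S)$ or $(A_2,S)$, with $S\subseteq[0,1]$ arbitrary, that is equivalent to the sentence $(A_1\lor A_2,\{0.5\})$ (i.e., has exactly the same models).
   Context: Setting (real-valued logic). Fix a finite set of atomic propositions, a finite set of binary connectives and a finite set of unary connectives. Each binary connective $\alpha$ comes with a function $f_\alpha:[0,1]^2\to[0,1]$ and each unary connective $\rho$ with a function $f_\rho:[0,1]\to[0,1]$. Formulas are built recursively from atomic propositions using the connectives. A model $M$ assigns a value in $[0,1]$ to each atomic proposition; the value of a compound formula is computed recursively via $f_\alpha$, $f_\rho$. A sentence is $(\sigma_1,\ldots,\sigma_k,S)$ with pairwise distinct formulas $\sigma_i$ and $S\subseteq[0,1]^k$; $M$ satisfies it if the tuple of values of $\sigma_1,\ldots,\sigma_k$ in $M$ lies in $S$. A Boolean combination of sentences is satisfied by $M$ according to the classical truth-table reading of $\land,\lor,\neg$ applied to the satisfaction of its constituent sentences. *)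

From Stdlib Require Export Reals List.
Open Scope R_scope.

Inductive formula (Atom : Type) : Type :=
| FAtom : Atom -> formula Atom
| FOr : formula Atom -> formula Atom -> formula Atom
| FNeg : formula Atom -> formula Atom.
Arguments FAtom {Atom} _.
Arguments FOr {Atom} _ _.
Arguments FNeg {Atom} _.

Definition is_model {Atom : Type} (M : Atom -> R) : Prop :=
  forall a, 0 <= M a <= 1.

Fixpoint fval {Atom : Type} (M : Atom -> R) (f : formula Atom) : R :=
  match f with
  | FAtom a => M a
  | FOr f g => Rmin 1 (fval M f + fval M g)
  | FNeg f => 1 - fval M f
  end.

(* Finite Boolean combinations of one-formula sentences (sigma, S). *)
Inductive bcomb (Atom : Type) : Type :=
| BSent : formula Atom -> (R -> Prop) -> bcomb Atom
| BAnd : bcomb Atom -> bcomb Atom -> bcomb Atom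
| BOr : bcomb Atom -> bcomb Atom -> bcomb Atom
| BNot : bcomb Atom -> bcomb Atom.
Arguments BSent {Atom} _ _.
Arguments BAnd {Atom} _ _.
Arguments BOr {Atom} _ _.
Arguments BNot {Atom} _.

Fixpoint bsat {Atom : Type} (M : Atom -> R) (b : bcomb Atom) : Prop :=
  match b with
  | BSent f T => T (fval M f)
  | BAnd b1 b2 => bsat M b1 /\ bsat M b2
  | BOr b1 b2 => bsat M b1 \/ bsat M b2
  | BNot b1 => ~ bsat M b1
  end.

Fixpoint only_atoms12 {Atom : Type} (A1 A2 : Atom) (b : bcomb Atom) : Prop :=
  match b with
  | BSent f T =>
      (f = FAtom A1 \/ f = FAtom A2) /\ (forall x, T x -> 0 <= x <= 1)
  | BAnd b1 b2 => only_atoms12 A1 A2 b1 /\ only_atoms12 A1 A2 b2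
  | BOr b1 b2 => only_atoms12 A1 A2 b1 /\ only_atoms12 A1 A2 b2
  | BNot b1 => only_atoms12 A1 A2 b1
  end.

From Stdlib Require Import Lra Classical ClassicalEpsilon.

(* Fix the value y of A2.  A Boolean combination b of
   sentences about A1 and A2 alone can only test the value x of A1 against
   finitely many sets S.  Refining an infinite set of candidate values once per
   such test (one half of every split stays infinite) yields an infinite set D
   of values of A1 on which b cannot tell x apart: bsat M b depends only on
   M A2 as long as M A1 ranges over D.  Starting from D = (0, 1/2) we pick two
   distinct x, x' in the refined set; the models (A1, A2) = (x, 1/2 - x) and
   (x', 1/2 - x) are then both models of b or both not, yet A1 \/ A2 takes the
   value 1/2 in the first and a different value in the second. *)

Definition infinite_set (D : R -> Prop) : Prop :=
  forall l : list R, exists x, D x /\ ~ In x l.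

Lemma infinite_split (D S : R -> Prop) : infinite_set D ->
  infinite_set (fun x => D x /\ S x) \/ infinite_set (fun x => D x /\ ~ S x).
Proof.
  intros HD.
  destruct (classic (infinite_set (fun x => D x /\ S x))) as [HS | HS];
    [left; exact HS | right].
  apply not_all_ex_not in HS as [l1 Hl1].
  intros l2.
  apply NNPP; intros Hl2.
  destruct (HD (l1 ++ l2)) as [x [Dx Nx]].
  apply Nx, in_or_app.
  destruct (classic (S x)) as [Sx | Sx].
  - left; apply NNPP; intros Nx1; apply Hl1; exists x; auto.
  - right; apply NNPP; intros Nx2; apply Hl2; exists x; auto.
Qed.

Lemma open_interval_infinite (a b : R) : a < b ->
  infinite_set (fun x => a < x < b).
Proof.
  intros Hab l; revert a b Hab.
  induction l as [| y l IH]; intros a b Hab.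
  - exists ((a + b) / 2); split; [lra | intros []].
  - destruct (IH a ((a + b) / 2) ltac:(lra)) as [z [Hz Nz]].
    destruct (Req_dec z y) as [-> | Hzy].
    + destruct (IH ((a + b) / 2) b ltac:(lra)) as [w [Hw Nw]].
      exists w; split; [lra |]; intros [E | E]; [lra | auto].
    + exists z; split; [lra |]; intros [E | E]; [congruence | auto].
Qed.

Lemma infinite_two_points (D : R -> Prop) : infinite_set D ->
  exists x x', D x /\ D x' /\ x <> x'.
Proof.
  intros HD.
  destruct (HD nil) as [x [Dx _]].
  destruct (HD (x :: nil)) as [x' [Dx' Nx']].
  exists x, x'; split; [exact Dx | split; [exact Dx' |]].
  intros ->; apply Nx'; left; reflexivity.
Qed.

Section Refinement.

Variables (Atom : Type) (A1 A2 : Atom).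

Definition blind_on (D : R -> Prop) (b : bcomb Atom) : Prop :=
  forall M M' : Atom -> R, D (M A1) -> D (M' A1) -> M A2 = M' A2 ->
    (bsat M b <-> bsat M' b).

Lemma blind_on_sub (D D' : R -> Prop) (b : bcomb Atom) :
  (forall x, D' x -> D x) -> blind_on D b -> blind_on D' b.
Proof. intros Hsub Hb M M' H1 H2; apply Hb; auto. Qed.

Lemma blind_on_binary (D : R -> Prop) (b1 b2 : bcomb Atom) :
  blind_on D b1 -> blind_on D b2 ->
  blind_on D (BAnd b1 b2) /\ blind_on D (BOr b1 b2).
Proof.
  intros H1 H2; split; intros M M' D1 D2 E; simpl;
    specialize (H1 M M' D1 D2 E); specialize (H2 M M' D1 D2 E); tauto.
Qed.

Lemma blind_refinement (b : bcomb Atom) : only_atoms12 A1 A2 b ->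
  forall D, infinite_set D ->
  exists D', (forall x, D' x -> D x) /\ infinite_set D' /\ blind_on D' b.
Proof.
  induction b as [f T | b1 IH1 b2 IH2 | b1 IH1 b2 IH2 | b1 IH1];
    simpl; intros Hb D HD.
  - destruct Hb as [[-> | ->] _].
    + (* a test on A1: keep the infinite half of D on which T is constant *)
      destruct (infinite_split D T HD) as [HT | HT].
      * exists (fun x => D x /\ T x); split; [intros x []; auto | split; [exact HT |]].
        intros M M' [_ h] [_ h'] _; simpl; tauto.
      * exists (fun x => D x /\ ~ T x); split; [intros x []; auto | split; [exact HT |]].
        intros M M' [_ h] [_ h'] _; simpl; tauto.
    + (* a test on A2 is blind everywhere *)
      exists D; split; [auto | split; [exact HD |]].
      intros M M' _ _ E; simpl; rewrite E; tauto.
  - (* refine for b1, then refine the result for b2 *)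
    destruct Hb as [Hb1 Hb2].
    destruct (IH1 Hb1 D HD) as [D1 [s1 [i1 p1]]].
    destruct (IH2 Hb2 D1 i1) as [D2 [s2 [i2 p2]]].
    exists D2; split; [auto | split; [exact i2 |]].
    exact (proj1 (blind_on_binary D2 b1 b2 (blind_on_sub D1 D2 b1 s2 p1) p2)).
  - destruct Hb as [Hb1 Hb2].
    destruct (IH1 Hb1 D HD) as [D1 [s1 [i1 p1]]].
    destruct (IH2 Hb2 D1 i1) as [D2 [s2 [i2 p2]]].
    exists D2; split; [auto | split; [exact i2 |]].
    exact (proj2 (blind_on_binary D2 b1 b2 (blind_on_sub D1 D2 b1 s2 p1) p2)).
  -
    destruct (IH1 Hb D HD) as [D1 [s1 [i1 p1]]].
    exists D1; split; [exact s1 | split; [exact i1 |]].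
    intros M M' h h' E; simpl; specialize (p1 M M' h h' E); tauto.
Qed.

Definition model_at (x y : R) (c : Atom) : R :=
  if excluded_middle_informative (c = A1) then x else y.

Lemma model_at_A1 (x y : R) : model_at x y A1 = x.
Proof. unfold model_at; destruct excluded_middle_informative; congruence. Qed.

Lemma model_at_A2 (x y : R) : A1 <> A2 -> model_at x y A2 = y.
Proof. intros Hneq; unfold model_at; destruct excluded_middle_informative; congruence. Qed.

Lemma model_at_is_model (x y : R) : 0 <= x <= 1 -> 0 <= y <= 1 ->
  is_model (model_at x y).
Proof. intros Hx Hy c; unfold model_at; destruct excluded_middle_informative; auto. Qed.

Lemma model_at_or_value (x y : R) : A1 <> A2 -> x + y <= 1 ->
  fval (model_at x y) (FOr (FAtom A1) (FAtom A2)) = x + y.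
Proof.
  intros Hneq Hsum; simpl.
  rewrite model_at_A1, (model_at_A2 x y Hneq).
  apply Rmin_right; exact Hsum.
Qed.

End Refinement.

Theorem theorem1 (Atom : Type) (Hfin : exists l : list Atom, forall a, In a l)
  (A1 A2 : Atom) (Hneq : A1 <> A2) :
  ~ exists b : bcomb Atom,
      only_atoms12 A1 A2 b /\
      forall M : Atom -> R, is_model M ->
        (bsat M b <-> fval M (FOr (FAtom A1) (FAtom A2)) = 1/2).
Proof.
  intros [b [Hb Hdef]].
  destruct (blind_refinement Atom A1 A2 b Hb (fun x => 0 < x < 1/2)
              (open_interval_infinite 0 (1/2) ltac:(lra)))
    as [D [HsubD [HinfD Hblind]]].
  destruct (infinite_two_points D HinfD) as [x [x' [Dx [Dx' Hxx']]]].
  pose proof (HsubD x Dx) as Hx; pose proof (HsubD x' Dx') as Hx'.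
  set (M := model_at Atom A1 x (1/2 - x)).
  set (M' := model_at Atom A1 x' (1/2 - x)).
  assert (HM : is_model M) by (apply model_at_is_model; lra).
  assert (HM' : is_model M') by (apply model_at_is_model; lra).
  assert (Hsat : bsat M b).
  { apply (Hdef M HM); unfold M; rewrite model_at_or_value; [lra | exact Hneq | lra]. }
  assert (Hsat' : bsat M' b).
  { apply (Hblind M M'); [| | | exact Hsat]; unfold M, M';
      rewrite ?model_at_A1, ?model_at_A2; auto. }
  apply (Hdef M' HM') in Hsat'.
  unfold M' in Hsat'; rewrite model_at_or_value in Hsat'; [lra | exact Hneq | lra].
Qed.
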